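(* Let $n$ be a positive integer, $1\le k\le n+1$, and let $F_k$ be a (directed or undirected) $k$-profile on $[n]\cup\{0,n+1\}$. Then: (1) there are positions $q_1,q_n$ such that in every permutation of $[n]\cup\{0,n+1\}$ whose (directed, resp. undirected) $k$-profile is $F_k$, the element $1$ is at position $q_1$ and the element $n$ is at position $q_n$; (2) with $l=\min\{q_1,q_n\}$ and $r=\max\{q_1,q_n\}$, the sets $X$, $Y$, $Z$ of elements located strictly between positions $0$ and $l$, strictly between positions $l$ and $r$, and strictly between positions $r$ and $n+1$, respectively, are the same for all permutations whose $k$-profile is $F_k$.
   Context: $[n]=\{1,\dots,n\}$. Permutations are of $[n]\cup\{0,n+1\}$, positions numbered $0,\dots,n+1$, always with $0$ at position $0$ and $n+1$ at position $n+1$. For a permutation $P$ and elements $t<t+i$, let $\min_{t,t+i}$ and $\max_{t,t+i}$ be the minimum and maximum of the elements located on $P$ in the interval delimited by the element $t$ (included) and the element $t+i$ (included). The $k$-profile of $P$ is the set $\{(t,t+i,[\min_{t,t+i},\max_{t,t+i}]) : 1\le i\le k,\ 0\le t\le n+1-i\}$; the directed $k$-profile additionally records, for each such pair, whether $t$ is left or right of $t+i$ in $P$. A ($k$-)profile $F_k$ is any set of constraints of this form (for general integers in place of the min and max); the claim concerns all permutations whose $k$-profile equals $F_k$ (possibly none). *)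

From mathcomp Require Import all_boot all_fingroup.
Set Implicit Arguments. Unset Strict Implicit. Unset Printing Implicit Defensive.

(* A permutation P of {0,...,n+1} is a bijection positions -> elements
   (positions 0..n+1), with P 0 = 0 and P (n+1) = n+1. *)
Definition valid_perm (n : nat) (P : {perm 'I_n.+2}) : Prop :=
  P ord0 = ord0 /\ P ord_max = ord_max.

Definition elem (n : nat) (P : {perm 'I_n.+2}) (j : nat) : nat :=
  val (P (inord j)).

Definition pos (n : nat) (P : {perm 'I_n.+2}) (t : nat) : nat :=
  val ((P^-1)%g (inord t)).

Definition wmin (n : nat) (P : {perm 'I_n.+2}) (t u : nat) : nat :=
  \big[minn/n.+1]_(minn (pos P t) (pos P u) <= j < (maxn (pos P t) (pos P u)).+1)
     elem P j.
Definition wmax (n : nat) (P : {perm 'I_n.+2}) (t u : nat) : nat :=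
  \max_(minn (pos P t) (pos P u) <= j < (maxn (pos P t) (pos P u)).+1)
     elem P j.

(* A (directed if d = true, undirected if d = false) profile entry:
   (t, t+i, (min, max), direction), where direction is
   Some (t is left of t+i) in the directed case and None otherwise. *)
Definition entry := (nat * nat * (nat * nat) * option bool)%type.

Definition kprofile (d : bool) (n k : nat) (P : {perm 'I_n.+2}) : pred entry :=
  fun x => let '(t, u, (mn, mx), o) := x in
    [&& t < u, u - t <= k, u <= n.+1,
        mn == wmin P t u, mx == wmax P t u &
        o == (if d then Some (pos P t < pos P u) else None)].

Definition between (n : nat) (P : {perm 'I_n.+2}) (a b : nat) : seq nat :=
  [seq elem P j | j <- iota a.+1 (b - a.+1)].

From mathcomp Require Import all_boot all_fingroup.
From mathcomp Require Import zify.
From Stdlib Require Import Classical.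
Set Implicit Arguments. Unset Strict Implicit. Unset Printing Implicit Defensive.

(* Fix c in {1, n}.  For consecutive elements t, t+1 both different from c,
   c lies between them exactly when the profile entry (t, t+1) has minimum
   <= 1 (for c = 1), resp. maximum >= n (for c = n); so the profile decides
   whether t and t+1 lie on the same side of c.  Propagating from an element
   whose side is known (n+1 for c = 1, 0 for c = n) determines the side of
   every element.  The position of c is the number of elements to its left,
   and the block X, Y or Z containing an element is read off from its sides
   relative to 1 and n. *)

Lemma addb_ltn_window (a b p : nat) : a != p -> b != p ->
  (a < p) (+) (b < p) = (minn a b <= p <= maxn a b).
Proof.
move=> /eqP ha /eqP hb.
by case: (leqP a b) => hab; case: (ltnP a p) => h1; case: (ltnP b p) => h2;
  apply/eqP; rewrite ?eqb_id; lia.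
Qed.

Lemma eq_xor_chain (f g : nat -> bool) a b :
  (forall t, a <= t < b -> f t (+) f t.+1 = g t (+) g t.+1) ->
  forall s, a <= s <= b -> f s = g s -> forall t, a <= t <= b -> f t = g t.
Proof.
move=> step.
have from_a t : a <= t <= b -> f a (+) f t = g a (+) g t.
  case/andP=> le_at; rewrite -(subnKC le_at); elim: (t - a) => [|m IH] hm.
    by rewrite addn0 !addbb.
  rewrite addnS -[f (a + m).+1](addKb (f (a + m))) -[g (a + m).+1](addKb (g (a + m))).
  by rewrite [LHS]addbA [RHS]addbA IH ?step //; lia.
move=> s hs fgs t ht.
move: (from_a t ht) (from_a s hs); rewrite fgs.
by move: (f a) (f t) (g a) (g t) (g s) => [] [] [] [] [].
Qed.

Lemma bigmin_leq_has (N c : nat) (f : nat -> nat) (s : seq nat) :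
  (\big[minn/N]_(j <- s) f j <= c) = (N <= c) || has (fun j => f j <= c) s.
Proof.
elim: s => [|j s IH]; first by rewrite big_nil orbF.
by rewrite big_cons geq_min IH /= orbCA.
Qed.

Lemma bigmax_geq_has (c : nat) (f : nat -> nat) (s : seq nat) :
  (c <= \max_(j <- s) f j) = (c == 0) || has (fun j => c <= f j) s.
Proof.
elim: s => [|j s IH]; first by rewrite big_nil leqn0 orbF.
by rewrite big_cons leq_max IH /= orbCA.
Qed.

Lemma sum_ltn_ord m p : \sum_(t < m) (t < p) = minn m p.
Proof.
elim: m => [|m IH]; first by rewrite big_ord0 min0n.
by rewrite big_ord_recr /= IH; case: (ltnP m p) => h /=; lia.
Qed.

Section Positions.
Variables (n : nat) (P : {perm 'I_n.+2}).

Lemma pos_ltn t : pos P t < n.+2.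
Proof. exact: ltn_ord. Qed.

Lemma elem_pos t : t < n.+2 -> elem P (pos P t) = t.
Proof. by move=> ht; rewrite /elem /pos inord_val permKV; apply: inordK. Qed.

Lemma pos_elem j : j < n.+2 -> pos P (elem P j) = j.
Proof. by move=> hj; rewrite /elem /pos inord_val permK; apply: inordK. Qed.

Lemma eq_pos t u : t < n.+2 -> u < n.+2 -> (pos P t == pos P u) = (t == u).
Proof.
move=> ht hu; apply/eqP/eqP => [e|-> //].
by rewrite -(elem_pos ht) -(elem_pos hu) e.
Qed.

Lemma sum_pos_ltn p : p <= n.+2 -> \sum_(t < n.+2) (pos P t < p) = p.
Proof.
move=> hp; rewrite (reindex_inj (@perm_inj _ P)) /=.
rewrite (eq_bigr (fun t : 'I_n.+2 => (t < p : nat))) ?sum_ltn_ord ?(minn_idPr hp) //.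
by move=> t _; rewrite /pos inord_val permK.
Qed.

Lemma has_elem_index_iota c lo hi : c < n.+2 -> hi <= n.+2 ->
  has (fun j => elem P j == c) (index_iota lo hi) = (lo <= pos P c < hi).
Proof.
move=> hc hhi; apply/hasP/idP => [[j]|hw]; last first.
  by exists (pos P c); rewrite ?mem_index_iota ?elem_pos.
rewrite mem_index_iota => hj /eqP <-.
by rewrite pos_elem // (leq_trans (proj2 (andP hj)) hhi).
Qed.

Lemma addb_pos_ltn_window c t u : c < n.+2 -> t < n.+2 -> u < n.+2 ->
  c != t -> c != u ->
  (pos P t < pos P c) (+) (pos P u < pos P c) =
  (minn (pos P t) (pos P u) <= pos P c <= maxn (pos P t) (pos P u)).
Proof.
by move=> hc ht hu ct cu; rewrite addb_ltn_window // eq_pos // eq_sym.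
Qed.

Hypothesis valid : valid_perm P.

Lemma pos0 : pos P 0 = 0.
Proof.
case: valid => h0 _; rewrite /pos (_ : inord 0 = ord0); last exact/val_inj/inordK.
by rewrite -{1}h0 permK.
Qed.

Lemma posN : pos P n.+1 = n.+1.
Proof.
case: valid => _ h1; rewrite /pos (_ : inord n.+1 = ord_max); last exact/val_inj/inordK.
by rewrite -{1}h1 permK.
Qed.

Lemma posN_ltnF c : (pos P n.+1 < pos P c) = false.
Proof. by rewrite posN ltnNge -ltnS pos_ltn. Qed.

Lemma pos_eq0 t : t < n.+2 -> (pos P t == 0) = (t == 0).
Proof. by move=> ht; rewrite -{1}pos0 eq_pos. Qed.

Lemma pos_eqN t : t < n.+2 -> (pos P t == n.+1) = (t == n.+1).
Proof. by move=> ht; rewrite -{1}posN eq_pos. Qed.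

Lemma wmin_leq1 t u : 0 < n -> 0 < t < n.+2 -> 0 < u < n.+2 ->
  (wmin P t u <= 1) = (minn (pos P t) (pos P u) <= pos P 1 <= maxn (pos P t) (pos P u)).
Proof.
move=> n_gt0 /andP[t0 tn] /andP[u0 un]; rewrite /wmin bigmin_leq_has ltnS leqNgt n_gt0 /=.
rewrite (@eq_has _ _ (predU (fun j => elem P j == 0) (fun j => elem P j == 1))); last first.
  by move=> j /=; case: (elem P j) => [|[|]].
rewrite has_predU !has_elem_index_iota ?gtn_max ?pos_ltn // pos0 ltnS.
have : pos P t != 0 by rewrite pos_eq0 // -lt0n.
have : pos P u != 0 by rewrite pos_eq0 // -lt0n.
by move: (pos P t) (pos P u) => a b; lia.
Qed.

Lemma wmax_geqn t u : 0 < n -> t < n.+1 -> u < n.+1 ->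
  (n <= wmax P t u) = (minn (pos P t) (pos P u) <= pos P n <= maxn (pos P t) (pos P u)).
Proof.
move=> n_gt0 tn un; rewrite /wmax bigmax_geq_has (negbTE (lt0n_neq0 n_gt0)) /=.
rewrite (@eq_has _ _ (predU (fun j => elem P j == n) (fun j => elem P j == n.+1))); last first.
  by move=> j /=; have : elem P j < n.+2 := ltn_ord _; lia.
rewrite has_predU !has_elem_index_iota ?gtn_max ?pos_ltn // posN ltnS.
have : pos P t != n.+1 by rewrite pos_eqN; lia.
have : pos P u != n.+1 by rewrite pos_eqN; lia.
have := pos_ltn t; have := pos_ltn u.
by move: (pos P t) (pos P u) => a b; lia.
Qed.

Lemma addb_left_of_1 t : 0 < n -> 1 < t < n.+1 ->
  (pos P t < pos P 1) (+) (pos P t.+1 < pos P 1) = (wmin P t t.+1 <= 1).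
Proof.
move=> n_gt0 t1n; rewrite addb_pos_ltn_window ?wmin_leq1 //; lia.
Qed.

Lemma addb_left_of_n t : 0 < n -> t.+1 < n ->
  (pos P t < pos P n) (+) (pos P t.+1 < pos P n) = (n <= wmax P t t.+1).
Proof. by move=> n_gt0 tn; rewrite addb_pos_ltn_window ?wmax_geqn //; lia. Qed.

End Positions.

Lemma pos_eq_of_left n (Q Q' : {perm 'I_n.+2}) c :
  (forall t, t < n.+2 -> (pos Q t < pos Q c) = (pos Q' t < pos Q' c)) ->
  pos Q c = pos Q' c.
Proof.
move=> left_same.
rewrite -(sum_pos_ltn Q (ltnW (pos_ltn Q c))) -(sum_pos_ltn Q' (ltnW (pos_ltn Q' c))).
by apply: eq_bigr => t _; rewrite left_same.
Qed.

Definition cmp_alike (c y y' : nat) := ((y <= c) = (y' <= c)) /\ ((c <= y) = (c <= y')).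

Lemma cmp_alike_ltn_eq c y y' :
  (y < c) = (y' < c) -> (y == c) = (y' == c) -> cmp_alike c y y'.
Proof.
move=> lt_same eq_same; split; last by rewrite [c <= y]leqNgt [c <= y']leqNgt lt_same.
by rewrite [y <= c]leq_eqVlt [y' <= c]leq_eqVlt lt_same eq_same.
Qed.

Lemma cmp_alike_minn a b y y' :
  cmp_alike a y y' -> cmp_alike b y y' -> cmp_alike (minn a b) y y'.
Proof. by move=> [a1 a2] [b1 b2]; split; rewrite ?leq_min ?geq_min ?a1 ?a2 ?b1 ?b2. Qed.

Lemma cmp_alike_maxn a b y y' :
  cmp_alike a y y' -> cmp_alike b y y' -> cmp_alike (maxn a b) y y'.
Proof. by move=> [a1 a2] [b1 b2]; split; rewrite ?leq_max ?geq_max ?a1 ?a2 ?b1 ?b2. Qed.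

Lemma mem_between n (Q : {perm 'I_n.+2}) a b x : b <= n.+1 ->
  (x \in between Q a b) = (x < n.+2) && (a < pos Q x < b).
Proof.
move=> bn; apply/mapP/idP => [[j]|/andP[xn /andP[ax xb]]].
  rewrite mem_iota => /andP[aj jb] ->.
  have {}jb : j < b by lia.
  by rewrite pos_elem ?ltn_ord ?aj ?jb // (leq_trans jb (leqW bn)).
exists (pos Q x); last by rewrite elem_pos.
by rewrite mem_iota ax subnKC // (leq_trans ax (ltnW xb)).
Qed.

Section Landmarks.
Variables (n : nat) (P P' : {perm 'I_n.+2}).

Definition landmark c := forall x, x < n.+2 -> cmp_alike c (pos P x) (pos P' x).

Lemma landmark_minn a b : landmark a -> landmark b -> landmark (minn a b).
Proof. by move=> la lb x xn; apply: cmp_alike_minn; [apply: la | apply: lb]. Qed.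

Lemma landmark_maxn a b : landmark a -> landmark b -> landmark (maxn a b).
Proof. by move=> la lb x xn; apply: cmp_alike_maxn; [apply: la | apply: lb]. Qed.

Lemma between_eq_landmark a b : landmark a -> landmark b -> b <= n.+1 ->
  between P a b =i between P' a b.
Proof.
move=> la lb bn x; rewrite !mem_between //.
case xn: (x < n.+2) => //=.
have [[la1 _] [_ lb2]] := (la x xn, lb x xn).
by rewrite [a < _]ltnNge [a < pos P' x]ltnNge [_ < b]ltnNge [pos P' x < b]ltnNge la1 lb2.
Qed.

Lemma landmark_of_left c : c < n.+2 -> pos P c = pos P' c ->
  (forall t, t < n.+2 -> (pos P t < pos P c) = (pos P' t < pos P' c)) ->
  landmark (pos P c).
Proof.
move=> cn pos_same left_same x xn; apply: cmp_alike_ltn_eq.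
  by rewrite left_same // pos_same.
by rewrite eq_pos // pos_same eq_pos.
Qed.

Hypotheses (valid : valid_perm P) (valid' : valid_perm P').

Lemma landmark0 : landmark 0.
Proof.
move=> x xn; apply: cmp_alike_ltn_eq; first by rewrite !ltn0.
by rewrite (pos_eq0 valid xn) (pos_eq0 valid' xn).
Qed.

Lemma landmarkN : landmark n.+1.
Proof.
move=> x xn; apply: cmp_alike_ltn_eq; last first.
  by rewrite (pos_eqN valid xn) (pos_eqN valid' xn).
have le : pos P x <= n.+1 := pos_ltn P x.
have le' : pos P' x <= n.+1 := pos_ltn P' x.
by rewrite !ltn_neqAle le le' !andbT (pos_eqN valid xn) (pos_eqN valid' xn).
Qed.

End Landmarks.

Section SameProfile.
Variables (d : bool) (n k : nat) (P P' : {perm 'I_n.+2}).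
Hypotheses (n_gt0 : 0 < n) (k_gt0 : 0 < k).
Hypotheses (valid : valid_perm P) (valid' : valid_perm P').
Hypothesis same_profile : kprofile d k P =i kprofile d k P'.

Lemma kprofile_wmin_wmax t u : t < u -> u - t <= k -> u <= n.+1 ->
  wmin P t u = wmin P' t u /\ wmax P t u = wmax P' t u.
Proof.
move=> tu utk un.
set e : entry := (t, u, (wmin P t u, wmax P t u),
                  if d then Some (pos P t < pos P u) else None).
have : e \in kprofile d k P by rewrite unfold_in /e /= tu utk un !eqxx.
rewrite same_profile unfold_in /e /=.
by case/and5P=> _ _ _ /eqP <- /andP[/eqP <- _].
Qed.

Lemma consecutive_wmin_wmax t : t < n.+1 ->
  wmin P t t.+1 = wmin P' t t.+1 /\ wmax P t t.+1 = wmax P' t t.+1.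
Proof. by move=> tn; apply: kprofile_wmin_wmax; rewrite ?subSnn. Qed.

Lemma left_of_1_same t : t < n.+2 -> (pos P t < pos P 1) = (pos P' t < pos P' 1).
Proof.
case: t => [|[|t]] ht; first by rewrite (pos0 valid) (pos0 valid') !lt0n !pos_eq0.
  by rewrite !ltnn.
apply: (@eq_xor_chain (fun t => pos P t < pos P 1) (fun t => pos P' t < pos P' 1)
          2 n.+1 _ n.+1) => [s s_range|||] /=.
- have [sn _] := consecutive_wmin_wmax (proj2 (andP s_range)).
  by rewrite !addb_left_of_1 // sn.
- by rewrite ltnS n_gt0 leqnn.
- by rewrite !posN_ltnF.
- exact: ht.
Qed.

Lemma left_of_n_same t : t < n.+2 -> (pos P t < pos P n) = (pos P' t < pos P' n).
Proof.
case: (ltnP t n) => [tn _|nt tn2].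
  apply: (@eq_xor_chain (fun t => pos P t < pos P n) (fun t => pos P' t < pos P' n)
            0 n.-1 _ 0) => [s s_range|||] /=.
  - have sn : s.+1 < n by rewrite -ltn_predRL; case/andP: s_range.
    have [_ sm] := consecutive_wmin_wmax (ltnW (ltnW sn)).
    by rewrite !addb_left_of_n // sm.
  - exact: leq0n.
  - by rewrite (pos0 valid) (pos0 valid') !lt0n !pos_eq0 // -lt0n.
  - by rewrite -ltnS prednK.
have [->|->] : t = n \/ t = n.+1 by lia.
  by rewrite !ltnn.
by rewrite !posN_ltnF.
Qed.

Lemma pos1_same : pos P 1 = pos P' 1.
Proof. exact: pos_eq_of_left left_of_1_same. Qed.

Lemma posn_same : pos P n = pos P' n.
Proof. exact: pos_eq_of_left left_of_n_same. Qed.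

Lemma landmark_pos1 : landmark P P' (pos P 1).
Proof. exact: landmark_of_left pos1_same left_of_1_same. Qed.

Lemma landmark_posn : landmark P P' (pos P n).
Proof. by apply: landmark_of_left posn_same left_of_n_same; rewrite ltnS leqW. Qed.

End SameProfile.

Theorem claim8 (d : bool) (n k : nat) (F : pred entry) :
  0 < n -> 1 <= k <= n.+1 ->
  exists q1 qn : nat,
    q1 <= n.+1 /\ qn <= n.+1 /\
    (forall P : {perm 'I_n.+2}, valid_perm P -> kprofile d k P =i F ->
       elem P q1 = 1 /\ elem P qn = n) /\
    (forall P P' : {perm 'I_n.+2},
       valid_perm P -> kprofile d k P =i F ->
       valid_perm P' -> kprofile d k P' =i F ->
       between P 0 (minn q1 qn) =i between P' 0 (minn q1 qn) /\
       between P (minn q1 qn) (maxn q1 qn) =i between P' (minn q1 qn) (maxn q1 qn) /\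
       between P (maxn q1 qn) n.+1 =i between P' (maxn q1 qn) n.+1).
Proof.
move=> n_gt0 /andP[k_gt0 _].
have [[P0 [valid0 F0]]|no_perm] :=
  classic (exists P0 : {perm 'I_n.+2}, valid_perm P0 /\ kprofile d k P0 =i F); last first.
  exists 0, 0; do 2!split => //.
  by split=> [P|P P'] valid FP *; case: no_perm; exists P.
have to_P0 (P : {perm 'I_n.+2}) : kprofile d k P =i F -> kprofile d k P =i kprofile d k P0.
  by move=> FP x; rewrite FP F0.
exists (pos P0 1), (pos P0 n).
split; first exact: pos_ltn.
split; first exact: pos_ltn.
split.
  move=> P valid FP; have same := to_P0 P FP.
  by rewrite -(pos1_same n_gt0 k_gt0 valid valid0 same)
    -(posn_same n_gt0 k_gt0 valid valid0 same) !elem_pos // ltnW.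
move=> P P' valid FP valid' FP'.
have same : kprofile d k P =i kprofile d k P' by move=> x; rewrite FP FP'.
rewrite -(pos1_same n_gt0 k_gt0 valid valid0 (to_P0 P FP))
  -(posn_same n_gt0 k_gt0 valid valid0 (to_P0 P FP)).
have l1 := landmark_pos1 n_gt0 k_gt0 valid valid' same.
have ln := landmark_posn n_gt0 k_gt0 valid valid' same.
have l0 := landmark0 valid valid'; have lN := landmarkN valid valid'.
have q1n : pos P 1 <= n.+1 := pos_ltn P 1.
have qnn : pos P n <= n.+1 := pos_ltn P n.
by do !split; apply: between_eq_landmark;
  rewrite ?geq_min ?geq_max ?q1n ?qnn //; apply: landmark_minn || apply: landmark_maxn.
Qed.
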